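(* Let $\Gamma\subset\mathbb{R}^2$ be a simple closed curve such that every set of $6$ points of $\Gamma$ is in c.s.c. position. If $\ell$ and $\ell'$ are two distinct parallel supporting lines of $\Gamma$, then $\ell\cap\Gamma$ and $\ell'\cap\Gamma$ are segments (possibly degenerate, i.e. single points, regarded as segments of length zero) of equal length.
   Context: A set of points in $\mathbb{R}^2$ is in c.s.c. position if it is contained in the boundary of a centrally symmetric convex body. Under the hypothesis, $\Gamma$ is the boundary of a convex body. A supporting line of $\Gamma$ is a line meeting $\Gamma$ such that $\Gamma$ lies in one of the closed half-planes it determines. *)

From Stdlib Require Import Reals Lra List.
Open Scope R_scope.

Definition pt := (R * R)%type.

Definition padd (p q : pt) : pt := (fst p + fst q, snd p + snd q).
Definition psub (p q : pt) : pt := (fst p - fst q, snd p - snd q).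
Definition pscale (t : R) (p : pt) : pt := (t * fst p, t * snd p).
Definition dot (p q : pt) : R := fst p * fst q + snd p * snd q.
Definition dist2 (p q : pt) : R := sqrt (Rsqr (fst p - fst q) + Rsqr (snd p - snd q)).

Definition in_interior (K : pt -> Prop) (p : pt) : Prop :=
  exists eps, 0 < eps /\ forall q, dist2 p q < eps -> K q.
Definition in_closure (K : pt -> Prop) (p : pt) : Prop :=
  forall eps, 0 < eps -> exists q, K q /\ dist2 p q < eps.
Definition in_boundary (K : pt -> Prop) (p : pt) : Prop :=
  in_closure K p /\ ~ in_interior K p.
Definition is_closed (K : pt -> Prop) : Prop :=
  forall p, in_closure K p -> K p.
Definition is_bounded (K : pt -> Prop) : Prop :=
  exists M, forall p, K p -> dist2 (0, 0) p <= M.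
Definition is_convex (K : pt -> Prop) : Prop :=
  forall p q t, K p -> K q -> 0 <= t <= 1 ->
    K (padd (pscale (1 - t) p) (pscale t q)).

Definition convex_body (K : pt -> Prop) : Prop :=
  is_convex K /\ is_closed K /\ is_bounded K /\ exists p, in_interior K p.

Definition centrally_symmetric (K : pt -> Prop) : Prop :=
  exists c : pt, forall p, K p -> K (psub (pscale 2 c) p).

Definition csc_position (S : pt -> Prop) : Prop :=
  exists K, convex_body K /\ centrally_symmetric K /\
    forall p, S p -> in_boundary K p.

Definition continuous_curve (g : R -> pt) : Prop :=
  forall t eps, 0 < eps -> exists delta, 0 < delta /\
    forall s, Rabs (s - t) < delta -> dist2 (g s) (g t) < eps.

(* Simple closed curve: image of a continuous 1-periodic map injective on [0,1)
   (i.e. a homeomorphic image of the circle). *)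
Definition simple_closed_curve (Gamma : pt -> Prop) : Prop :=
  exists g : R -> pt,
    continuous_curve g /\
    (forall t, g (t + 1) = g t) /\
    (forall s t, 0 <= s < 1 -> 0 <= t < 1 -> g s = g t -> s = t) /\
    (forall p, Gamma p <-> exists t, g t = p).

Definition is_line (l : pt -> Prop) : Prop :=
  exists (a : pt) (c : R), a <> (0, 0) /\ forall p, l p <-> dot a p = c.

Definition parallel (l l' : pt -> Prop) : Prop :=
  exists (a : pt) (c c' : R), a <> (0, 0) /\
    (forall p, l p <-> dot a p = c) /\ (forall p, l' p <-> dot a p = c').

Definition same_set (A B : pt -> Prop) : Prop := forall p, A p <-> B p.

Definition supporting_line (l Gamma : pt -> Prop) : Prop :=
  is_line l /\ (exists p, l p /\ Gamma p) /\
  exists (a : pt) (c : R), a <> (0, 0) /\ (forall p, l p <-> dot a p = c) /\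
    ((forall p, Gamma p -> dot a p <= c) \/ (forall p, Gamma p -> c <= dot a p)).

Definition segment (p q : pt) (x : pt) : Prop :=
  exists t, 0 <= t <= 1 /\ x = padd (pscale (1 - t) p) (pscale t q).

From Stdlib Require Import Reals List Lra Lia Classical.
Import ListNotations.
Open Scope R_scope.

(* Let a be the common normal of the two lines, so that Gamma lies in the strip
   clo <= dot a x <= chi.  Any at most six points of Gamma lie on the boundary of a centrally
   symmetric convex body K, and a boundary point of K never lies strictly inside a chord of K
   that has points of K on both sides.  Applied to four points this shows that
   Gamma meets each supporting line in a convex set (if z on the line between two points of
   Gamma were missing, the perpendicular through z would meet Gamma twice below the line),
   which is closed since Gamma is compact: a segment.  Applied to six points it compares the
   lengths of the faces: slightly above the lower line, Gamma crosses at two points that are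
   horizontally within the lower face up to any margin; reflecting the upper face [p, q]
   through the centre of K and interpolating produces a chord of K at that level as long as
   [p, q], which the two boundary points must straddle.  So the upper face is at most as
   long as the lower one, and by symmetry they have equal length. *)

(** * Coordinates along a direction *)

Definition perp (a : pt) : pt := (- snd a, fst a).

Definition abscissa (a x : pt) : R := dot (perp a) x.

Definition normsq (a : pt) : R := dot a a.

Definition negp (a : pt) : pt := (- fst a, - snd a).

Definition comb (t : R) (p q : pt) : pt := padd (pscale (1 - t) p) (pscale t q).

Definition point_reflection (o x : pt) : pt := psub (pscale 2 o) x.

Definition cross (u v : pt) : R := fst u * snd v - snd u * fst v.

(* Inverse of the coordinate map [x |-> (dot a x, abscissa a x)]. *)
Definition level_point (a : pt) (c s : R) : pt :=
  ((fst a * c - snd a * s) / normsq a, (snd a * c + fst a * s) / normsq a).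

Lemma ratio_between x y z : x < y < z \/ z < y < x -> 0 < (y - x) / (z - x) < 1.
Proof.
  intros H; assert (E : y - x = (y - x) / (z - x) * (z - x)) by (field; lra).
  set (t := (y - x) / (z - x)) in *; split; nra.
Qed.

Lemma ratio_between_le x y z : x <= y <= z -> x < z -> 0 <= (y - x) / (z - x) <= 1.
Proof.
  intros H Hxz; assert (E : y - x = (y - x) / (z - x) * (z - x)) by (field; lra).
  set (t := (y - x) / (z - x)) in *; split; nra.
Qed.

Lemma normsq_pos a : a <> (0, 0) -> 0 < normsq a.
Proof.
  destruct a as [a1 a2]; unfold normsq, dot; simpl; intros Ha.
  destruct (Req_dec a1 0), (Req_dec a2 0); subst; try (exfalso; apply Ha; reflexivity); nra.
Qed.

Lemma dot_comb a t p q : dot a (comb t p q) = (1 - t) * dot a p + t * dot a q.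
Proof. unfold dot, comb, padd, pscale; simpl; ring. Qed.

Lemma abscissa_comb a t p q :
  abscissa a (comb t p q) = (1 - t) * abscissa a p + t * abscissa a q.
Proof. apply dot_comb. Qed.

Lemma dot_psub a p q : dot a (psub p q) = dot a p - dot a q.
Proof. unfold dot, psub; simpl; ring. Qed.

Lemma abscissa_psub a p q : abscissa a (psub p q) = abscissa a p - abscissa a q.
Proof. apply dot_psub. Qed.

Lemma dot_point_reflection a o x : dot a (point_reflection o x) = 2 * dot a o - dot a x.
Proof. unfold dot, point_reflection, psub, pscale; simpl; ring. Qed.

Lemma abscissa_point_reflection a o x : abscissa a (point_reflection o x) = 2 * abscissa a o - abscissa a x.
Proof. apply dot_point_reflection. Qed.

Lemma dot_pscale a k x : dot (pscale k a) x = k * dot a x.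
Proof. unfold dot, pscale; simpl; ring. Qed.

Lemma dot_negp a x : dot (negp a) x = - dot a x.
Proof. unfold dot, negp; simpl; ring. Qed.

Lemma abscissa_negp a x : abscissa (negp a) x = - abscissa a x.
Proof. unfold abscissa, dot, perp, negp; simpl; ring. Qed.

Lemma abscissa_perp a x : abscissa (perp a) x = - dot a x.
Proof. unfold abscissa, perp, dot; simpl; ring. Qed.

Lemma negp_nonzero a : a <> (0, 0) -> negp a <> (0, 0).
Proof.
  destruct a as [a1 a2]; unfold negp; simpl; intros Ha E; injection E as E1 E2.
  apply Ha; f_equal; lra.
Qed.

Lemma perp_nonzero a : a <> (0, 0) -> perp a <> (0, 0).
Proof.
  destruct a as [a1 a2]; unfold perp; simpl; intros Ha E; injection E as E1 E2.
  apply Ha; f_equal; lra.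
Qed.

Lemma negp_involutive a : negp (negp a) = a.
Proof. destruct a; unfold negp; simpl; f_equal; ring. Qed.

Lemma dot_level_point a c s : a <> (0, 0) -> dot a (level_point a c s) = c.
Proof.
  intros Ha; pose proof (normsq_pos a Ha).
  destruct a; unfold dot, level_point, normsq, dot in *; simpl in *; field; lra.
Qed.

Lemma abscissa_level_point a c s : a <> (0, 0) -> abscissa a (level_point a c s) = s.
Proof.
  intros Ha; pose proof (normsq_pos a Ha).
  destruct a; unfold abscissa, perp, dot, level_point, normsq, dot in *; simpl in *; field; lra.
Qed.

Lemma coords_inj a x y : a <> (0, 0) ->
  dot a x = dot a y -> abscissa a x = abscissa a y -> x = y.
Proof.
  intros Ha Hd Hs; pose proof (normsq_pos a Ha) as HN.
  assert (E1 : normsq a * fst x = normsq a * fst y).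
  { transitivity (fst a * dot a x - snd a * abscissa a x);
      [|rewrite Hd, Hs]; unfold normsq, abscissa, perp, dot; simpl; ring. }
  assert (E2 : normsq a * snd x = normsq a * snd y).
  { transitivity (snd a * dot a x + fst a * abscissa a x);
      [|rewrite Hd, Hs]; unfold normsq, abscissa, perp, dot; simpl; ring. }
  apply Rmult_eq_reg_l in E1, E2; try lra.
  destruct x, y; simpl in *; congruence.
Qed.

Lemma comb_comb mu rho y w v :
  comb mu (comb rho y w) (comb rho y v) = comb rho y (comb mu w v).
Proof. destruct y, w, v; unfold comb, padd, pscale; simpl; f_equal; ring. Qed.

Lemma comb_on_level a p q x : a <> (0, 0) ->
  dot a p = dot a x -> dot a q = dot a x -> abscissa a p <> abscissa a q ->
  x = comb ((abscissa a x - abscissa a p) / (abscissa a q - abscissa a p)) p q.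
Proof.
  intros Ha Hp Hq Hpq; apply (coords_inj a); rewrite ?dot_comb, ?abscissa_comb; auto.
  - rewrite Hp, Hq; ring.
  - field; lra.
Qed.

Lemma segment_level_points a c al be x : a <> (0, 0) -> al <= be ->
  segment (level_point a c al) (level_point a c be) x <-> dot a x = c /\ al <= abscissa a x <= be.
Proof.
  intros Ha Hab; unfold segment.
  change (padd (pscale (1 - ?t) ?p) (pscale ?t ?q)) with (comb t p q).
  split.
  - intros [t [Ht ->]].
    rewrite dot_comb, abscissa_comb, !dot_level_point, !abscissa_level_point by auto.
    split; [ring | nra].
  - intros [Hx Hs]; destruct (Req_dec al be) as [<- | Hne].
    + exists 0; split; [lra|]; apply (coords_inj a); [auto | |];
        rewrite ?dot_comb, ?abscissa_comb, ?dot_level_point, ?abscissa_level_point by auto; lra.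
    + exists ((abscissa a x - al) / (be - al)); split.
      * apply ratio_between_le; lra.
      * apply (coords_inj a);
          rewrite ?dot_comb, ?abscissa_comb, ?dot_level_point, ?abscissa_level_point by auto;
          [auto | rewrite Hx; ring | field; lra].
Qed.

Lemma dist2_level_points a c c' al be al' be' : be - al = be' - al' ->
  dist2 (level_point a c al) (level_point a c be) = dist2 (level_point a c' al') (level_point a c' be').
Proof.
  intros E; replace be with (be' - al' + al) by lra.
  unfold dist2, level_point; simpl; f_equal; unfold Rdiv, Rsqr; ring.
Qed.

Lemma Rabs_fst_le_dist2 p q : Rabs (fst p - fst q) <= dist2 p q.
Proof.
  unfold dist2; rewrite <- sqrt_Rsqr_abs; apply sqrt_le_1_alt.
  pose proof (Rle_0_sqr (snd p - snd q)); lra.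
Qed.

Lemma Rabs_snd_le_dist2 p q : Rabs (snd p - snd q) <= dist2 p q.
Proof.
  unfold dist2; rewrite <- sqrt_Rsqr_abs; apply sqrt_le_1_alt.
  pose proof (Rle_0_sqr (fst p - fst q)); lra.
Qed.

Lemma dist2_comb t p q : 0 <= t -> dist2 p (comb t p q) = t * dist2 p q.
Proof.
  intros Ht; unfold dist2, comb, padd, pscale; simpl.
  transitivity (sqrt (Rsqr t * (Rsqr (fst p - fst q) + Rsqr (snd p - snd q)))).
  - f_equal; unfold Rsqr; ring.
  - rewrite sqrt_mult_alt, sqrt_Rsqr; auto; apply Rle_0_sqr.
Qed.

Lemma cross_antisym u v : cross v u = - cross u v.
Proof. unfold cross; ring. Qed.

Lemma cross_normsq a u v :
  normsq a * cross u v = dot a u * abscissa a v - abscissa a u * dot a v.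
Proof. unfold normsq, cross, abscissa, perp, dot; simpl; ring. Qed.

Lemma cross_nonzero a u v : a <> (0, 0) ->
  dot a u <> 0 -> dot a v = 0 -> abscissa a v <> 0 -> cross u v <> 0.
Proof.
  intros Ha Hu Hv Hav E; pose proof (cross_normsq a u v) as N.
  rewrite E, Hv, !Rmult_0_r, Rminus_0_r in N.
  apply (Rmult_integral_contrapositive_currified _ _ Hu Hav); auto.
Qed.

Lemma line_normal_unique a c a1 c1 : a <> (0, 0) -> a1 <> (0, 0) ->
  (forall p, dot a p = c <-> dot a1 p = c1) ->
  exists k, k <> 0 /\ a1 = pscale k a /\ c1 = k * c.
Proof.
  intros Ha Ha1 Hl; pose proof (normsq_pos a Ha) as HN.
  set (p0 := level_point a c 0); set (p1 := level_point a c 1).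
  assert (D0 : dot a1 p0 = c1) by (apply Hl, dot_level_point, Ha).
  assert (D1 : dot a1 p1 = c1) by (apply Hl, dot_level_point, Ha).
  assert (Hperp : dot a1 (perp a) = 0).
  { assert (E : dot a1 p1 - dot a1 p0 = dot a1 (perp a) / normsq a)
      by (unfold p0, p1, level_point, perp, dot; simpl; field; lra).
    rewrite D0, D1, Rminus_diag in E; apply (Rmult_eq_reg_r (/ normsq a));
      [unfold Rdiv in E; lra | apply Rinv_neq_0_compat; lra]. }
  set (k := dot a a1 / normsq a).
  assert (Ha1k : a1 = pscale k a).
  { apply (coords_inj a); auto.
    - unfold k, normsq, pscale, dot in *; simpl in *; field; lra.
    - transitivity 0; [rewrite <- Hperp | ]; unfold k, abscissa, perp, pscale, dot; simpl; ring. }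
  exists k; split; [|split; auto].
  - intros Hk; apply Ha1; rewrite Ha1k, Hk; unfold pscale; f_equal; ring.
  - rewrite <- D0, Ha1k, dot_pscale; unfold p0; rewrite dot_level_point; auto.
Qed.

(** * Interior points of convex sets *)

Lemma cramer_bound u v : cross u v <> 0 ->
  exists C, 0 < C /\ forall d : pt, exists al be,
    d = padd (pscale al u) (pscale be v) /\
    Rabs al <= C * (Rabs (fst d) + Rabs (snd d)) /\
    Rabs be <= C * (Rabs (fst d) + Rabs (snd d)).
Proof.
  intros HD; set (D := cross u v) in *.
  set (M := Rabs (fst u) + Rabs (snd u) + Rabs (fst v) + Rabs (snd v) + 1).
  assert (HDp : 0 < Rabs D) by (apply Rabs_pos_lt; auto).
  assert (HM : 1 <= M /\ Rabs (fst u) <= M /\ Rabs (snd u) <= M /\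
               Rabs (fst v) <= M /\ Rabs (snd v) <= M).
  { unfold M; pose proof (Rabs_pos (fst u)); pose proof (Rabs_pos (snd u));
      pose proof (Rabs_pos (fst v)); pose proof (Rabs_pos (snd v)); lra. }
  assert (Hcoef : forall k x y p q, k * D = x * p - y * q -> Rabs p <= M -> Rabs q <= M ->
            Rabs k <= M / Rabs D * (Rabs x + Rabs y)).
  { intros k x y p q Hk Hp Hq.
    assert (Hn : Rabs k * Rabs D <= M * (Rabs x + Rabs y)).
    { rewrite <- Rabs_mult, Hk; unfold Rminus.
      eapply Rle_trans; [apply Rabs_triang|]; rewrite Rabs_Ropp, !Rabs_mult.
      pose proof (Rabs_pos x); pose proof (Rabs_pos y); nra. }
    replace (M / Rabs D * (Rabs x + Rabs y)) with (M * (Rabs x + Rabs y) / Rabs D) by (field; lra).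
    apply (Rmult_le_reg_r (Rabs D)); [auto|]; unfold Rdiv; rewrite Rmult_assoc, Rinv_l; lra. }
  exists (M / Rabs D); split; [apply Rdiv_lt_0_compat; lra|].
  intros d; exists ((fst d * snd v - snd d * fst v) / D), ((fst u * snd d - snd u * fst d) / D).
  split; [|split].
  - destruct d, u, v; unfold padd, pscale, D, cross in *; simpl in *; f_equal; field; auto.
  - apply (Hcoef _ _ _ (snd v) (fst v)); [field|..]; tauto.
  - rewrite (Rplus_comm (Rabs (fst d))).
    apply (Hcoef _ _ _ (fst u) (snd u)); [field|..]; tauto.
Qed.

(* A point y near x is the midpoint of the points of the two chords obtained by moving
   from x by twice the Cramer coefficients of y - x along each chord. *)
Lemma interior_of_crossing_chords K P1 Q1 P2 Q2 s t :
  is_convex K -> K P1 -> K Q1 -> K P2 -> K Q2 -> 0 < s < 1 -> 0 < t < 1 ->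
  comb s P1 Q1 = comb t P2 Q2 -> cross (psub Q1 P1) (psub Q2 P2) <> 0 ->
  in_interior K (comb s P1 Q1).
Proof.
  intros HK K1 L1 K2 L2 Hs Ht Hx HD.
  destruct (cramer_bound _ _ HD) as [C [HC Hdec]].
  set (m := Rmin (Rmin s (1 - s)) (Rmin t (1 - t))).
  assert (Hm : 0 < m /\ m <= s /\ m <= 1 - s /\ m <= t /\ m <= 1 - t).
  { pose proof (Rmin_l s (1 - s)); pose proof (Rmin_r s (1 - s));
    pose proof (Rmin_l t (1 - t)); pose proof (Rmin_r t (1 - t));
    pose proof (Rmin_l (Rmin s (1 - s)) (Rmin t (1 - t)));
    pose proof (Rmin_r (Rmin s (1 - s)) (Rmin t (1 - t))).
    unfold m; repeat split; try lra; repeat apply Rmin_glb_lt; lra. }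
  exists (m / (4 * C)); split; [apply Rdiv_lt_0_compat; lra|].
  intros y Hy.
  destruct (Hdec (psub y (comb s P1 Q1))) as [al [be [Hd [Hal Hbe]]]].
  assert (Hsmall : C * (Rabs (fst (psub y (comb s P1 Q1))) + Rabs (snd (psub y (comb s P1 Q1))))
                   < m / 2).
  { pose proof (Rabs_fst_le_dist2 (comb s P1 Q1) y); pose proof (Rabs_snd_le_dist2 (comb s P1 Q1) y).
    unfold psub; cbn [fst snd]; rewrite (Rabs_minus_sym (fst y)), (Rabs_minus_sym (snd y)).
    replace (m / 2) with (C * (2 * (m / (4 * C)))) by (field; lra).
    apply Rmult_lt_compat_l; lra. }
  destruct (Rabs_def2 al (m / 2)) as [Hal1 Hal2]; [lra|].
  destruct (Rabs_def2 be (m / 2)) as [Hbe1 Hbe2]; [lra|].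
  replace y with (comb (1 / 2) (comb (s + 2 * al) P1 Q1) (comb (t + 2 * be) P2 Q2)).
  - apply HK; [apply HK | apply HK |]; auto; lra.
  - destruct P1, Q1, P2, Q2, y; unfold comb, padd, pscale, psub in *; simpl in *.
    injection Hx as Hx1 Hx2; injection Hd as Hd1 Hd2; f_equal; lra.
Qed.

Lemma interior_of_cevian K a y w v mu rho :
  is_convex K -> a <> (0, 0) -> K y -> K w -> K v -> 0 < mu < 1 -> 0 < rho < 1 ->
  dot a y = dot a (comb mu w v) -> abscissa a y <> abscissa a (comb mu w v) ->
  dot a w <> dot a v -> in_interior K (comb rho y (comb mu w v)).
Proof.
  intros HK Ha Ky Kw Kv Hmu Hrho Hd Hs Hwv.
  rewrite <- comb_comb.
  apply (interior_of_crossing_chords K _ _ y (comb mu w v) mu rho HK);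
    [apply HK; auto; lra | apply HK; auto; lra | auto | apply HK; auto; lra | auto | auto |
     apply comb_comb |].
  apply (cross_nonzero a); auto; rewrite ?dot_psub, ?abscissa_psub, ?dot_comb.
  - intros E; apply Hwv; apply (Rmult_eq_reg_l rho); lra.
  - rewrite <- dot_comb; lra.
  - lra.
Qed.

Lemma interior_of_level_chord K a x y1 y2 w v :
  is_convex K -> a <> (0, 0) -> K y1 -> K y2 -> K w -> K v ->
  dot a y1 = dot a x -> dot a y2 = dot a x ->
  abscissa a y1 < abscissa a x < abscissa a y2 -> dot a v < dot a x < dot a w ->
  in_interior K x.
Proof.
  intros HK Ha K1 K2 Kw Kv D1 D2 Hs Hd.
  set (mu := (dot a x - dot a w) / (dot a v - dot a w)).
  assert (Hmu : 0 < mu < 1) by (apply ratio_between; lra).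
  set (u := comb mu w v).
  assert (Du : dot a u = dot a x) by (unfold u, mu; rewrite dot_comb; field; lra).
  assert (Ku : K u) by (apply HK; auto; lra).
  destruct (total_order_T (abscissa a u) (abscissa a x)) as [[Hlt | Heq] | Hgt].
  - rewrite (comb_on_level a y2 u x) by (auto; lra).
    apply (interior_of_cevian K a); auto; try (fold u; lra).
    apply ratio_between; lra.
  - assert (Hxu : x = u) by (apply (coords_inj a); auto).
    set (t := (abscissa a x - abscissa a y1) / (abscissa a y2 - abscissa a y1)).
    assert (Hx : x = comb t y1 y2) by (apply comb_on_level; auto; lra).
    rewrite Hx; apply (interior_of_crossing_chords K y1 y2 w v t mu HK); auto.
    + apply ratio_between; lra.
    + rewrite <- Hx; exact Hxu.
    + rewrite cross_antisym; apply Ropp_neq_0_compat, (cross_nonzero a);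
        rewrite ?dot_psub, ?abscissa_psub; auto; lra.
  - rewrite (comb_on_level a y1 u x) by (auto; lra).
    apply (interior_of_cevian K a); auto; try (fold u; lra).
    apply ratio_between; lra.
Qed.

(* Reflecting the top chord [p, q] through the centre and interpolating gives a chord of
   the same length at every lower level; boundary points at that level lie outside it. *)
Lemma symmetric_body_chord_ge K o a p q m u v b :
  is_convex K -> a <> (0, 0) -> (forall z, K z -> K (point_reflection o z)) ->
  K p -> K q -> K m -> K u -> K v -> K b ->
  ~ in_interior K m -> ~ in_interior K u -> ~ in_interior K v ->
  dot a p = dot a m -> dot a q = dot a m -> abscissa a p < abscissa a m < abscissa a q ->
  dot a v = dot a u -> dot a b < dot a u < dot a m -> abscissa a u < abscissa a v ->
  abscissa a q - abscissa a p <= abscissa a v - abscissa a u.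
Proof.
  intros HK Ha Hsym Kp Kq Km Ku Kv Kb Nm Nu Nv Dp Dq Hm Dv Hb Huv.
  assert (Hbelow : forall w, K w -> dot a w <= dot a m).
  { intros w Kw; apply Rnot_lt_le; intros Hw.
    apply Nm, (interior_of_level_chord K a m p q w u); auto; lra. }
  pose proof (Hbelow _ (Hsym b Kb)) as Hb'; rewrite dot_point_reflection in Hb'.
  set (lam := (dot a u - dot a m) / (2 * dot a o - dot a m - dot a m)).
  assert (Hlam : 0 < lam < 1) by (apply ratio_between; lra).
  set (x1 := comb lam p (point_reflection o q)).
  set (x2 := comb lam q (point_reflection o p)).
  assert (K1 : K x1) by (apply HK; auto; lra).
  assert (K2 : K x2) by (apply HK; auto; lra).
  assert (D1 : dot a x1 = dot a u)
    by (unfold x1, lam; rewrite dot_comb, dot_point_reflection, Dp, Dq; field; lra).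
  assert (D2 : dot a x2 = dot a u)
    by (unfold x2, lam; rewrite dot_comb, dot_point_reflection, Dp, Dq; field; lra).
  assert (Hlen : abscissa a x2 - abscissa a x1 = abscissa a q - abscissa a p)
    by (unfold x1, x2; rewrite !abscissa_comb, !abscissa_point_reflection; ring).
  apply Rnot_lt_le; intros Hshort.
  destruct (Rlt_or_le (abscissa a x1) (abscissa a u)).
  - apply Nu, (interior_of_level_chord K a u x1 v p b); auto; lra.
  - apply Nv, (interior_of_level_chord K a v u x2 p b); auto; lra.
Qed.

Lemma in_closure_of_comb (A : pt -> Prop) x m :
  (forall t, 0 < t < 1 -> A (comb t x m)) -> in_closure A x.
Proof.
  intros HA eps Heps.
  assert (Hd : 0 <= dist2 x m) by apply sqrt_pos.
  set (t := eps / (dist2 x m + 2 * eps)).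
  assert (E : t * (dist2 x m + 2 * eps) = eps) by (unfold t; field; lra).
  assert (Ht : 0 < t < 1) by (split; [unfold t; apply Rdiv_lt_0_compat | ]; nra).
  exists (comb t x m); split; [apply HA, Ht|].
  rewrite dist2_comb by lra; nra.
Qed.

(** * The curve *)

Definition curve_param (Gamma : pt -> Prop) (g : R -> pt) : Prop :=
  continuous_curve g /\ (forall t, g (t + 1) = g t) /\
  (forall s t, 0 <= s < 1 -> 0 <= t < 1 -> g s = g t -> s = t) /\
  (forall p, Gamma p <-> exists t, g t = p).

Definition six_point_csc (Gamma : pt -> Prop) : Prop :=
  forall ps : list pt, length ps = 6%nat -> NoDup ps ->
    (forall p, In p ps -> Gamma p) -> csc_position (fun x => In x ps).

Lemma periodic_shift_Z {A : Type} (f : R -> A) :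
  (forall t, f (t + 1) = f t) -> forall n t, f (t + IZR n) = f t.
Proof.
  intros Hp n; induction n using Z.peano_ind; intros t.
  - rewrite Rplus_0_r; reflexivity.
  - rewrite succ_IZR, <- (IHn t), <- (Hp (t + IZR n)); f_equal; ring.
  - unfold Z.pred; rewrite plus_IZR, <- (IHn t), <- (Hp (t + (IZR n + IZR (-1)))); f_equal; simpl; ring.
Qed.

Lemma periodic_representative {A : Type} (f : R -> A) :
  (forall t, f (t + 1) = f t) -> forall t, exists s, 0 <= s < 1 /\ f s = f t.
Proof.
  intros Hp t; destruct (archimed t) as [H1 H2].
  exists (t + IZR (1 - up t)); split.
  - rewrite minus_IZR; simpl; lra.
  - apply periodic_shift_Z; auto.
Qed.

Lemma NoDup_extend {A : Type} (P : A -> Prop) (pool : list A) :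
  NoDup pool -> (forall z, In z pool -> P z) ->
  forall qs, NoDup qs -> (length qs <= length pool)%nat -> (forall z, In z qs -> P z) ->
  exists rs, NoDup rs /\ length rs = length pool /\ incl qs rs /\ (forall z, In z rs -> P z).
Proof.
  intros Hpool HPpool qs Hqs Hlen.
  remember (length pool - length qs)%nat as n eqn:Hn; revert qs Hqs Hlen Hn.
  induction n as [|n IH]; intros qs Hqs Hlen Hn HPqs.
  - exists qs; repeat split; auto; [lia | apply incl_refl].
  - destruct (classic (exists z, In z pool /\ ~ In z qs)) as [[z [Hz Hzq]] | Hall].
    + destruct (IH (z :: qs)) as [rs [H1 [H2 [H3 H4]]]];
        [constructor; auto | simpl; lia | simpl; lia | intros y [<- | Hy]; auto |].
      exists rs; repeat split; auto; intros y Hy; apply H3; simpl; auto.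
    + assert (Hincl : incl pool qs).
      { intros z Hz; apply NNPP; intros Hzq; apply Hall; eauto. }
      pose proof (NoDup_incl_length Hpool Hincl); lia.
Qed.

Definition pt_eq_dec (x y : pt) : {x = y} + {x <> y}.
Proof. decide equality; apply Req_dec_T. Defined.

Section Curve.
Variables (Gamma : pt -> Prop) (g : R -> pt).
Hypothesis Hg : curve_param Gamma g.

Lemma curve_point t : Gamma (g t).
Proof. apply Hg; eauto. Qed.

Lemma curve_periodic t : g (t + 1) = g t.
Proof. apply Hg. Qed.

Lemma curve_point_param x : Gamma x -> exists t, 0 <= t < 1 /\ g t = x.
Proof.
  intros Hx; destruct Hg as [_ [_ [_ HG]]]; apply HG in Hx; destruct Hx as [t <-].
  apply (periodic_representative g), curve_periodic.
Qed.

Lemma continuity_lipschitz_curve (f : pt -> R) :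
  (forall p q, Rabs (f p - f q) <= dist2 p q) -> continuity (fun t => f (g t)).
Proof.
  intros Hf t eps He; destruct (proj1 Hg t eps He) as [d [Hd H]].
  exists d; split; [lra|]; intros s [_ Hs]; simpl in *; unfold R_dist in *.
  pose proof (Hf (g s) (g t)); specialize (H s Hs); lra.
Qed.

Lemma continuity_dot_curve a : continuity (fun t => dot a (g t)).
Proof.
  exact (continuity_plus _ _
           (continuity_scal _ (fst a) (continuity_lipschitz_curve fst Rabs_fst_le_dist2))
           (continuity_scal _ (snd a) (continuity_lipschitz_curve snd Rabs_snd_le_dist2))).
Qed.

Lemma curve_closed z : in_closure Gamma z -> Gamma z.
Proof.
  intros Hz.
  set (d := fun t => Rsqr (fst z - fst (g t)) + Rsqr (snd z - snd (g t))).
  assert (Cd : continuity d).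
  { assert (Cconst : forall k, continuity (fun _ => k))
      by (intros k; apply continuity_const; intros ? ?; reflexivity).
    pose proof (continuity_minus _ _ (Cconst (fst z))
                  (continuity_lipschitz_curve fst Rabs_fst_le_dist2)) as C1.
    pose proof (continuity_minus _ _ (Cconst (snd z))
                  (continuity_lipschitz_curve snd Rabs_snd_le_dist2)) as C2.
    exact (continuity_plus _ _ (continuity_mult _ _ C1 C1) (continuity_mult _ _ C2 C2)). }
  destruct (continuity_ab_min d 0 1 ltac:(lra) (fun t _ => Cd t)) as [t0 [Hmin _]].
  assert (Hall : forall t, d t0 <= d t).
  { intros t; destruct (periodic_representative g curve_periodic t) as [s [Hs Es]].
    replace (d t) with (d s) by (unfold d; rewrite Es; reflexivity); apply Hmin; lra. }
  apply Hg; exists t0.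
  destruct (Req_dec (d t0) 0) as [E | E].
  - apply Rplus_sqr_eq_0 in E; destruct E as [E1 E2].
    destruct z, (g t0); simpl in *; f_equal; lra.
  - assert (Hpos : 0 < d t0)
      by (unfold d in *; pose proof (Rle_0_sqr (fst z - fst (g t0)));
          pose proof (Rle_0_sqr (snd z - snd (g t0))); lra).
    destruct (Hz (sqrt (d t0)) (sqrt_lt_R0 _ Hpos)) as [q [Hq Hzq]].
    destruct (curve_point_param q Hq) as [t [_ <-]].
    apply sqrt_lt_0_alt in Hzq; specialize (Hall t); unfold d in *; lra.
Qed.

Lemma dot_bounded_on_curve a : exists M1 M2, forall x, Gamma x -> M1 <= dot a x <= M2.
Proof.
  pose proof (continuity_dot_curve a) as C.
  destruct (continuity_ab_maj _ 0 1 ltac:(lra) (fun t _ => C t)) as [t1 [H1 _]].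
  destruct (continuity_ab_min _ 0 1 ltac:(lra) (fun t _ => C t)) as [t2 [H2 _]].
  exists (dot a (g t2)), (dot a (g t1)); intros x Hx.
  destruct (curve_point_param x Hx) as [t [Ht <-]].
  split; [apply H2 | apply H1]; lra.
Qed.

Lemma distinct_zeros_of_sign_change (F : R -> R) :
  continuity F -> (forall t, F (t + 1) = F t) ->
  forall s1 s2, 0 <= s1 < s2 -> s2 < 1 -> F s1 * F s2 < 0 ->
  exists z1 z2, F z1 = 0 /\ F z2 = 0 /\ g z1 <> g z2.
Proof.
  intros HF HFp s1 s2 H12 H2 Hsign.
  assert (N1 : F s1 <> 0) by (intros E; rewrite E in Hsign; lra).
  assert (N2 : F s2 <> 0) by (intros E; rewrite E in Hsign; lra).
  destruct (IVT_cor F s1 s2 HF ltac:(lra) ltac:(lra)) as [z1 [Hz1 F1]].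
  destruct (IVT_cor F s2 (s1 + 1) HF ltac:(lra) ltac:(rewrite HFp; lra)) as [z2 [Hz2 F2]].
  assert (z1 <> s1 /\ z1 <> s2 /\ z2 <> s2 /\ z2 <> s1 + 1) as Hne
    by (repeat split; intros ->; rewrite ?HFp in *; auto).
  exists z1, z2; repeat split; auto; intros E.
  destruct Hg as [_ [_ [Hinj _]]].
  destruct (Rlt_or_le z2 1).
  - apply Hinj in E; lra.
  - replace (g z2) with (g (z2 - 1)) in E by (rewrite <- (curve_periodic (z2 - 1)); f_equal; ring).
    apply Hinj in E; lra.
Qed.

Lemma curve_crosses_line_twice a c x y : a <> (0, 0) ->
  Gamma x -> Gamma y -> dot a x < c < dot a y ->
  exists u v, Gamma u /\ Gamma v /\ dot a u = c /\ dot a v = c /\ abscissa a u < abscissa a v.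
Proof.
  intros Ha Hx Hy Hc.
  destruct (curve_point_param x Hx) as [tx [Htx <-]].
  destruct (curve_point_param y Hy) as [ty [Hty <-]].
  set (F := fun t => dot a (g t) - c).
  assert (CF : continuity F)
    by (apply continuity_minus; [apply continuity_dot_curve |
                                 apply continuity_const; intros ? ?; reflexivity]).
  assert (PF : forall t, F (t + 1) = F t)
    by (intros t; unfold F; rewrite curve_periodic; reflexivity).
  assert (Hsign : F (Rmin tx ty) * F (Rmax tx ty) < 0)
    by (unfold F, Rmin, Rmax; destruct (Rle_dec tx ty); nra).
  assert (Hord : tx <> ty) by (intros <-; lra).
  destruct (distinct_zeros_of_sign_change F CF PF (Rmin tx ty) (Rmax tx ty))
    as [z1 [z2 [F1 [F2 Hne]]]]; auto;
    try (unfold Rmin, Rmax; destruct (Rle_dec tx ty); lra).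
  unfold F in F1, F2.
  assert (Hs : abscissa a (g z1) <> abscissa a (g z2))
    by (intros E; apply Hne, (coords_inj a); auto; lra).
  destruct (Rlt_or_le (abscissa a (g z1)) (abscissa a (g z2))).
  - exists (g z1), (g z2); repeat split; auto using curve_point; lra.
  - exists (g z2), (g z1); repeat split; auto using curve_point; lra.
Qed.

Lemma curve_six_points : NoDup [g 0; g (1/6); g (2/6); g (3/6); g (4/6); g (5/6)].
Proof.
  destruct Hg as [_ [_ [Hinj _]]].
  repeat (constructor; [simpl; intro H;
    repeat match goal with H : _ \/ _ |- _ => destruct H as [H | H] end;
    try contradiction; apply Hinj in H; lra |]).
  constructor.
Qed.

Lemma csc_body_of_few_points ps :
  six_point_csc Gamma -> (length ps <= 6)%nat -> (forall p, In p ps -> Gamma p) ->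
  exists K o, is_convex K /\ (forall z, K z -> K (point_reflection o z)) /\
    forall p, In p ps -> K p /\ ~ in_interior K p.
Proof.
  intros H6 Hlen Hps.
  assert (Hqs : incl (nodup pt_eq_dec ps) ps) by (intros z Hz; apply (nodup_In pt_eq_dec); auto).
  pose proof (NoDup_incl_length (NoDup_nodup pt_eq_dec ps) Hqs).
  destruct (NoDup_extend Gamma _ curve_six_points
              ltac:(intros z Hz; simpl in Hz; repeat destruct Hz as [<- | Hz];
                    auto using curve_point; contradiction)
              _ (NoDup_nodup pt_eq_dec ps) ltac:(simpl; lia) ltac:(auto))
    as [rs [Hrs [Hlen6 [Hincl HGrs]]]].
  destruct (H6 rs Hlen6 Hrs HGrs) as [K [[HK [Hcl _]] [[o Ho] Hbd]]].
  exists K, o; split; [|split]; auto.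
  intros p Hp; destruct (Hbd p) as [Hp1 Hp2];
    [apply Hincl, (nodup_In pt_eq_dec); auto | split; auto].
Qed.

End Curve.

(** * Faces on supporting lines *)

Lemma real_set_hull (S : R -> Prop) M1 M2 :
  (forall r, S r -> M1 <= r <= M2) -> (exists r, S r) ->
  exists al be, al <= be /\ (forall r, S r -> al <= r <= be) /\
    forall r, al < r < be -> exists s1 s2, S s1 /\ S s2 /\ s1 < r < s2.
Proof.
  intros HM [r0 Hr0].
  destruct (completeness S) as [be [Hbe1 Hbe2]];
    [exists M2; intros r Hr; apply HM, Hr | eauto |].
  destruct (completeness (fun r => S (- r))) as [nal [Hal1 Hal2]].
  { exists (- M1); intros r Hr; pose proof (HM _ Hr); lra. }
  { exists (- r0); rewrite Ropp_involutive; auto. }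
  assert (Hin : forall r, S r -> - nal <= r <= be).
  { intros r Hr; split; [|apply Hbe1, Hr].
    assert (- r <= nal) by (apply Hal1; rewrite Ropp_involutive; auto); lra. }
  exists (- nal), be; split; [pose proof (Hin r0 Hr0); lra | split; auto].
  intros r Hr.
  assert (H1 : exists s1, S s1 /\ s1 < r).
  { apply NNPP; intros N.
    assert (nal <= - r); [|lra].
    apply Hal2; intros s Hs; apply Rnot_lt_le; intros Hlt; apply N; exists (- s); split; auto; lra. }
  assert (H2 : exists s2, S s2 /\ r < s2).
  { apply NNPP; intros N.
    assert (be <= r); [|lra].
    apply Hbe2; intros s Hs; apply Rnot_lt_le; intros Hlt; apply N; eauto. }
  destruct H1 as [s1 [Hs1 Hl1]], H2 as [s2 [Hs2 Hl2]]; exists s1, s2; auto.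
Qed.

Definition face_interval (Gamma : pt -> Prop) (a : pt) (c al be : R) : Prop :=
  forall x, (Gamma x /\ dot a x = c) <-> (dot a x = c /\ al <= abscissa a x <= be).

Lemma face_interval_negp Gamma a c al be :
  face_interval Gamma a c al be -> face_interval Gamma (negp a) (- c) (- be) (- al).
Proof.
  intros Hf x; rewrite dot_negp, abscissa_negp.
  destruct (Hf x) as [H1 H2]; split.
  - intros [Hx Hd]; destruct H1 as [_ Hs]; [split; auto; lra | split; lra].
  - intros [Hd Hs]; destruct H2 as [Hx _]; [split; lra | split; auto; lra].
Qed.

Section Faces.
Variables (Gamma : pt -> Prop) (g : R -> pt).
Hypothesis Hg : curve_param Gamma g.
Hypothesis H6 : six_point_csc Gamma.
Variable a : pt.
Hypothesis Ha : a <> (0, 0).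

Lemma face_interval_level_point c al be s :
  face_interval Gamma a c al be -> al <= s <= be -> Gamma (level_point a c s).
Proof.
  intros Hf Hs; apply Hf; rewrite dot_level_point, abscissa_level_point by auto; auto.
Qed.

(* Otherwise [r1] would lie inside the chord [comb lam r2 x, comb lam r2 y] of the
   centrally symmetric body through x, y, r1, r2, with x above and r2 below it. *)
Lemma no_two_curve_points_below_chord x y r1 r2 :
  Gamma x -> Gamma y -> Gamma r1 -> Gamma r2 ->
  dot a y = dot a x -> dot a r2 < dot a r1 < dot a x -> abscissa a r2 = abscissa a r1 ->
  abscissa a x < abscissa a r1 < abscissa a y -> False.
Proof.
  intros Gx Gy G1 G2 Dy Hd Hs Hxy.
  destruct (csc_body_of_few_points Gamma g Hg [x; y; r1; r2]) as [K [o [HK [_ Hbd]]]];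
    auto; [intros p Hp; simpl in Hp; repeat destruct Hp as [<- | Hp]; auto; contradiction |].
  destruct (Hbd x) as [Kx _], (Hbd y) as [Ky _], (Hbd r1) as [K1 N1], (Hbd r2) as [K2 _];
    simpl; auto 6.
  set (lam := (dot a r1 - dot a r2) / (dot a x - dot a r2)).
  assert (Hlam : 0 < lam < 1) by (apply ratio_between; lra).
  assert (Dl : forall z, dot a z = dot a x -> dot a (comb lam r2 z) = dot a r1)
    by (intros z Dz; rewrite dot_comb, Dz; unfold lam; field; lra).
  apply N1, (interior_of_level_chord K a r1 (comb lam r2 x) (comb lam r2 y) x r2);
    auto; try (apply HK; auto; lra); try lra.
  rewrite !abscissa_comb; split; nra.
Qed.

Lemma face_convex c x y z : (forall w, Gamma w -> dot a w <= c) ->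
  Gamma x -> Gamma y -> dot a x = c -> dot a y = c -> dot a z = c ->
  abscissa a x < abscissa a z < abscissa a y -> Gamma z.
Proof.
  intros Hup Gx Gy Dx Dy Dz Hs; apply NNPP; intros Nz.
  destruct (curve_crosses_line_twice Gamma g Hg (perp a) (abscissa a z) x y)
    as [u [v [Gu [Gv [Du [Dv Huv]]]]]]; auto using perp_nonzero.
  rewrite !abscissa_perp in Huv; fold (abscissa a u) (abscissa a v) in Du, Dv.
  assert (Hu : dot a u < c).
  { destruct (Rle_lt_or_eq_dec _ _ (Hup u Gu)) as [| E]; auto.
    exfalso; apply Nz; replace z with u; auto; apply (coords_inj a); auto; lra. }
  apply (no_two_curve_points_below_chord x y u v); auto; lra.
Qed.

Lemma supporting_face_interval c : (forall x, Gamma x -> dot a x <= c) ->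
  (exists x, Gamma x /\ dot a x = c) -> exists al be, al <= be /\ face_interval Gamma a c al be.
Proof.
  intros Hup [x0 [G0 D0]].
  set (S := fun r => exists x, Gamma x /\ dot a x = c /\ abscissa a x = r).
  destruct (dot_bounded_on_curve Gamma g Hg (perp a)) as [M1 [M2 HM]].
  destruct (real_set_hull S M1 M2) as [al [be [Hab [Hin Hgap]]]].
  { intros r [x [Gx [_ <-]]]; apply HM, Gx. }
  { exists (abscissa a x0), x0; auto. }
  assert (Hopen : forall x, dot a x = c -> al < abscissa a x < be -> Gamma x).
  { intros x Dx Hx; destruct (Hgap _ Hx) as [s1 [s2 [[y1 [G1 [D1 <-]]] [[y2 [G2 [D2 <-]]] Hs]]]].
    apply (face_convex c y1 y2 x); auto. }
  exists al, be; split; auto; intros x; split.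
  - intros [Gx Dx]; split; auto; apply Hin; exists x; auto.
  - intros [Dx Hx]; split; auto.
    destruct (Req_dec al be) as [<- | Hne].
    + assert (H0 : al <= abscissa a x0 <= al) by (apply Hin; exists x0; auto).
      replace x with x0; auto; apply (coords_inj a); auto; lra.
    + apply (curve_closed Gamma g Hg), (in_closure_of_comb _ x (level_point a c ((al + be) / 2))).
      intros t Ht; apply Hopen; rewrite ?dot_comb, ?abscissa_comb, ?dot_level_point,
        ?abscissa_level_point by auto; [rewrite Dx; ring | split; nra].
Qed.

(* [Phi] is positive on the whole curve, so it has a positive minimum [eps];
   [/ 2 * (z + Rabs z)] is the positive part of [z]. *)
Lemma abscissa_near_lowest_level clo al be del : 0 < del ->
  (forall x, Gamma x -> clo <= dot a x) -> face_interval Gamma a clo al be ->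
  exists eps, 0 < eps /\ forall x, Gamma x -> dot a x < clo + eps ->
    al - del < abscissa a x < be + del.
Proof.
  intros Hdel Hlow Hface.
  set (mid := (al + be) / 2); set (rad := (be - al) / 2 + del).
  set (Z := fun t => rad - Rabs (abscissa a (g t) - mid)).
  set (Phi := fun t => dot a (g t) - clo + / 2 * (Z t + Rabs (Z t))).
  assert (Cconst : forall k, continuity (fun _ => k))
    by (intros k; apply continuity_const; intros ? ?; reflexivity).
  assert (CZ : continuity Z).
  { apply continuity_minus; [apply Cconst|].
    apply (continuity_comp (fun t => abscissa a (g t) - mid) Rabs); [|apply Rcontinuity_abs].
    apply continuity_minus; [apply (continuity_dot_curve Gamma g Hg (perp a)) | apply Cconst]. }
  assert (CPhi : continuity Phi).
  { exact (continuity_plus _ _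
             (continuity_minus _ _ (continuity_dot_curve Gamma g Hg a) (Cconst clo))
             (continuity_scal _ (/ 2) (continuity_plus _ _ CZ (continuity_comp Z Rabs CZ Rcontinuity_abs)))). }
  assert (Hpos : forall t, 0 < Phi t).
  { intros t; pose proof (Hlow _ (curve_point Gamma g Hg t)) as Hl; unfold Phi.
    assert (0 <= / 2 * (Z t + Rabs (Z t))) by (pose proof (Rle_abs (- Z t)); rewrite Rabs_Ropp in *; lra).
    destruct (Rle_lt_or_eq_dec _ _ Hl) as [| E]; [lra|].
    assert (Hs : dot a (g t) = clo /\ al <= abscissa a (g t) <= be)
      by (apply Hface; split; [apply (curve_point Gamma g Hg) | lra]).
    assert (Rabs (abscissa a (g t) - mid) <= (be - al) / 2) by (apply Rabs_le; unfold mid; lra).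
    assert (del <= Z t) by (unfold Z, rad; lra).
    rewrite Rabs_right by lra; lra. }
  destruct (continuity_ab_min Phi 0 1 ltac:(lra) (fun t _ => CPhi t)) as [t0 [Hmin _]].
  set (eps := Phi t0) in *.
  exists eps; split; [apply Hpos|].
  intros x Gx Dx; destruct (curve_point_param Gamma g Hg x Gx) as [t [Ht <-]].
  pose proof (Hmin t ltac:(lra)) as Hm; unfold Phi in Hm.
  assert (HZ : 0 < Z t)
    by (apply Rnot_le_lt; intros HZ; rewrite Rabs_left1 in Hm by auto; lra).
  destruct (Rabs_def2 (abscissa a (g t) - mid) rad) as [H1 H2]; [unfold Z in HZ; lra|].
  unfold rad, mid in *; lra.
Qed.

(* Just above the lower face every curve point is horizontally close to it, while the
   curve crosses such a level twice; by [symmetric_body_chord_ge] the two crossings are at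
   least as far apart as the endpoints of the upper face. *)
Lemma face_length_le chi clo al be al' be' : clo < chi ->
  (forall x, Gamma x -> clo <= dot a x <= chi) ->
  al <= be -> face_interval Gamma a chi al be ->
  al' <= be' -> face_interval Gamma a clo al' be' -> be - al <= be' - al'.
Proof.
  intros Hc Hstrip Hab Htop Hab' Hbot; apply Rnot_lt_le; intros Hlong.
  set (del := ((be - al) - (be' - al')) / 4).
  destruct (abscissa_near_lowest_level clo al' be' del) as [eps [Heps Hnear]];
    [unfold del; lra | intros x Gx; apply Hstrip, Gx | auto |].
  set (c0 := clo + Rmin eps (chi - clo) / 2).
  assert (Hc0 : clo < c0 < chi /\ c0 < clo + eps).
  { pose proof (Rmin_l eps (chi - clo)); pose proof (Rmin_r eps (chi - clo)).
    assert (0 < Rmin eps (chi - clo)) by (apply Rmin_glb_lt; lra); unfold c0; lra. }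
  set (p := level_point a chi al); set (q := level_point a chi be).
  set (m := level_point a chi ((al + be) / 2)); set (b := level_point a clo al').
  assert (Gp : Gamma p) by (apply (face_interval_level_point chi al be); auto; lra).
  assert (Gq : Gamma q) by (apply (face_interval_level_point chi al be); auto; lra).
  assert (Gm : Gamma m) by (apply (face_interval_level_point chi al be); auto; lra).
  assert (Gb : Gamma b) by (apply (face_interval_level_point clo al' be'); auto; lra).
  destruct (curve_crosses_line_twice Gamma g Hg a c0 b p) as [u [v [Gu [Gv [Du [Dv Huv]]]]]];
    auto; [unfold b, p; rewrite !dot_level_point by auto; lra |].
  destruct (csc_body_of_few_points Gamma g Hg [p; q; m; u; v; b]) as [K [o [HK [Hsym Hbd]]]];
    auto; [intros z Hz; simpl in Hz; repeat destruct Hz as [<- | Hz]; auto; contradiction |].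
  destruct (Hbd p) as [Kp _], (Hbd q) as [Kq _], (Hbd m) as [Km Nm], (Hbd u) as [Ku Nu],
    (Hbd v) as [Kv Nv], (Hbd b) as [Kb _]; simpl; auto 7.
  pose proof (Hnear u Gu ltac:(lra)); pose proof (Hnear v Gv ltac:(lra)).
  assert (Hge := symmetric_body_chord_ge K o a p q m u v b HK Ha Hsym Kp Kq Km Ku Kv Kb Nm Nu Nv).
  unfold p, q, m, b in Hge; rewrite !dot_level_point, !abscissa_level_point in Hge by auto.
  unfold del in *; assert (be - al <= abscissa a v - abscissa a u) by (apply Hge; lra); lra.
Qed.

End Faces.

Lemma strip_faces_equal Gamma g a clo chi :
  curve_param Gamma g -> six_point_csc Gamma -> a <> (0, 0) -> clo < chi ->
  (forall x, Gamma x -> clo <= dot a x <= chi) ->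
  (exists x, Gamma x /\ dot a x = chi) -> (exists x, Gamma x /\ dot a x = clo) ->
  exists p q p' q',
    (forall x, (Gamma x /\ dot a x = chi) <-> segment p q x) /\
    (forall x, (Gamma x /\ dot a x = clo) <-> segment p' q' x) /\
    dist2 p q = dist2 p' q'.
Proof.
  intros Hg H6 Ha Hc Hstrip Htop [y [Gy Dy]].
  destruct (supporting_face_interval Gamma g Hg H6 a Ha chi) as [al [be [Hab Htop']]];
    [intros x Gx; apply Hstrip, Gx | auto |].
  destruct (supporting_face_interval Gamma g Hg H6 (negp a) (negp_nonzero a Ha) (- clo))
    as [al' [be' [Hab' Hbot']]];
    [intros x Gx; rewrite dot_negp; pose proof (Hstrip x Gx); lra |
     exists y; rewrite dot_negp; split; auto; lra |].
  pose proof (face_interval_negp _ _ _ _ _ Hbot') as Hbot.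
  rewrite negp_involutive, Ropp_involutive in Hbot.
  pose proof (face_length_le Gamma g Hg H6 a Ha chi clo al be (- be') (- al')
                Hc Hstrip Hab Htop' ltac:(lra) Hbot).
  pose proof (face_length_le Gamma g Hg H6 (negp a) (negp_nonzero a Ha) (- clo) (- chi)
                al' be' (- be) (- al) ltac:(lra)
                ltac:(intros x Gx; rewrite dot_negp; pose proof (Hstrip x Gx); lra)
                Hab' Hbot' ltac:(lra) (face_interval_negp _ _ _ _ _ Htop')).
  exists (level_point a chi al), (level_point a chi be),
    (level_point a clo (- be')), (level_point a clo (- al')).
  split; [|split].
  - intros x; rewrite segment_level_points by auto; apply Htop'.
  - intros x; rewrite segment_level_points by (auto; lra); apply Hbot.
  - apply dist2_level_points; lra.
Qed.

(** * Parallel supporting lines *)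

Lemma supporting_side_of_normal (Gamma : pt -> Prop) a c a1 c1 :
  a <> (0, 0) -> a1 <> (0, 0) -> (forall p, dot a p = c <-> dot a1 p = c1) ->
  (forall p, Gamma p -> dot a1 p <= c1) \/ (forall p, Gamma p -> c1 <= dot a1 p) ->
  (forall p, Gamma p -> dot a p <= c) \/ (forall p, Gamma p -> c <= dot a p).
Proof.
  intros Ha Ha1 Hl Hside.
  destruct (line_normal_unique a c a1 c1 Ha Ha1 Hl) as [k [Hk [-> ->]]].
  destruct (Rdichotomy k 0 Hk), Hside as [S | S];
    [right | left | left | right]; intros p Gp; specialize (S p Gp);
    rewrite dot_pscale in S; apply Rnot_lt_le; intros Hlt; nra.
Qed.

Lemma strip_of_sides (Gamma : pt -> Prop) a c c' x y : c < c' ->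
  (forall p, Gamma p -> dot a p <= c) \/ (forall p, Gamma p -> c <= dot a p) ->
  (forall p, Gamma p -> dot a p <= c') \/ (forall p, Gamma p -> c' <= dot a p) ->
  Gamma x -> dot a x = c -> Gamma y -> dot a y = c' ->
  forall z, Gamma z -> c <= dot a z <= c'.
Proof.
  intros Hc [S | S] [S' | S'] Gx Dx Gy Dy z Gz;
    pose proof (S _ Gz); pose proof (S' _ Gz);
    pose proof (S _ Gx); pose proof (S' _ Gx); pose proof (S _ Gy); pose proof (S' _ Gy); lra.
Qed.

Lemma parallel_faces_equal Gamma g a c c' x y :
  curve_param Gamma g -> six_point_csc Gamma -> a <> (0, 0) -> c <> c' ->
  (forall p, Gamma p -> dot a p <= c) \/ (forall p, Gamma p -> c <= dot a p) ->
  (forall p, Gamma p -> dot a p <= c') \/ (forall p, Gamma p -> c' <= dot a p) ->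
  Gamma x -> dot a x = c -> Gamma y -> dot a y = c' ->
  exists p q p' q',
    (forall z, (Gamma z /\ dot a z = c) <-> segment p q z) /\
    (forall z, (Gamma z /\ dot a z = c') <-> segment p' q' z) /\
    dist2 p q = dist2 p' q'.
Proof.
  intros Hg H6 Ha Hcc S S' Gx Dx Gy Dy.
  destruct (Rlt_or_le c c') as [Hlt | Hle].
  - destruct (strip_faces_equal Gamma g a c c' Hg H6 Ha Hlt
                (strip_of_sides Gamma a c c' x y Hlt S S' Gx Dx Gy Dy))
      as [p [q [p' [q' [F [F' D]]]]]]; eauto.
    exists p', q', p, q; auto.
  - apply (strip_faces_equal Gamma g a c' c Hg H6 Ha); eauto; [lra|].
    apply (strip_of_sides Gamma a c' c y x); auto; lra.
Qed.

Theorem mainTheorem8 (Gamma : pt -> Prop) :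
  simple_closed_curve Gamma ->
  (forall ps : list pt, length ps = 6%nat -> NoDup ps ->
     (forall p, In p ps -> Gamma p) -> csc_position (fun x => In x ps)) ->
  forall l l' : pt -> Prop,
    supporting_line l Gamma -> supporting_line l' Gamma ->
    parallel l l' -> ~ same_set l l' ->
    exists p q p' q' : pt,
      (forall x, (l x /\ Gamma x) <-> segment p q x) /\
      (forall x, (l' x /\ Gamma x) <-> segment p' q' x) /\
      dist2 p q = dist2 p' q'.
Proof.
  intros [g Hg] H6 l l' [_ [[x [lx Gx]] [a1 [c1 [Ha1 [Hl1 S1]]]]]]
    [_ [[y [ly Gy]] [a2 [c2 [Ha2 [Hl2 S2]]]]]] [a [c [c' [Ha [Hl Hl']]]]] Hne.
  assert (Hcc : c <> c') by (intros <-; apply Hne; intros p; rewrite Hl, Hl'; tauto).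
  assert (E1 : forall p, dot a p = c <-> dot a1 p = c1) by (intros p; rewrite <- Hl, Hl1; tauto).
  assert (E2 : forall p, dot a p = c' <-> dot a2 p = c2) by (intros p; rewrite <- Hl', Hl2; tauto).
  destruct (parallel_faces_equal Gamma g a c c' x y Hg H6 Ha Hcc
              (supporting_side_of_normal Gamma a c a1 c1 Ha Ha1 E1 S1)
              (supporting_side_of_normal Gamma a c' a2 c2 Ha Ha2 E2 S2)
              Gx (proj1 (Hl x) lx) Gy (proj1 (Hl' y) ly))
    as [p [q [p' [q' [F [F' D]]]]]].
  exists p, q, p', q'; split; [|split]; auto; intros z; [rewrite Hl, <- F | rewrite Hl', <- F']; tauto.
Qed.
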